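(* For $r\ge0$ let $\rho_D(r)$ be the unique positive solution $\rho$ of $\frac{(\rho-1)^3}{(2\rho-1)^2}=r^2$, and let $\rho(r)$ be the unique positive solution $\rho$ of $\frac{1}{\rho^2}\left(2e^{\rho-1}-1\right)=r^2+1$. Then $1+4r^2\le\rho_D(r)\le 2+4r^2$ for all $r\ge0$, and $\rho(r)=1+(1+o(1))\ln(1+r^2)$ as $r\to\infty$. *)

From Stdlib Require Import Reals.
From Coquelicot Require Import Coquelicot.
Open Scope R_scope.

(* rho is a positive solution of (rho-1)^3/(2 rho-1)^2 = r^2.
   The side condition 2 rho - 1 <> 0 makes the division genuine
   (Stdlib's x/0 is 0, which would otherwise create the spurious
   "solution" rho = 1/2 at r = 0). *)
Definition is_rhoD_sol (r rho : R) : Prop :=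
  0 < rho /\ 2 * rho - 1 <> 0 /\
  (rho - 1) ^ 3 / (2 * rho - 1) ^ 2 = r ^ 2.

Definition is_rho_sol (r rho : R) : Prop :=
  0 < rho /\ / rho ^ 2 * (2 * exp (rho - 1) - 1) = r ^ 2 + 1.

From Stdlib Require Import Reals Lra Psatz.
From Coquelicot Require Import Coquelicot.
Open Scope R_scope.

(* With t = rho_D - 1 and s = r^2 the first equation reads t^3 = s (2t + 1)^2,
   and comparing t^3 with 4s t^2 and (1 + 4s) t^2 traps t in [4s, 1 + 4s].
   For the second, put u = 1 + r^2, so that 2 e^(rho - 1) = rho^2 u + 1.
   Since e^(rho - 1) > 1/2 forces rho > 1/5, taking logarithms gives
   ln u - ln 50 <= rho - 1 <= ln u + 2 ln (1 + rho).  Bounding ln (1 + rho) by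
   2 sqrt (1 + rho) makes the upper bound a quadratic inequality in
   sqrt (1 + rho), whence |rho - 1 - ln u| <= 14 sqrt (ln u): the relative
   error is O(1 / sqrt (ln u)). *)

Lemma ln_le_sub1 x : 0 < x -> ln x <= x - 1.
Proof.
  intros Hx. pose proof (exp_ineq1_le (ln x)) as H.
  rewrite exp_ln in H by exact Hx. lra.
Qed.

Lemma ln_le_sqrt x : 0 < x -> ln x <= 2 * (sqrt x - 1).
Proof.
  intros Hx. assert (Hs : 0 < sqrt x) by (apply sqrt_lt_R0; exact Hx).
  rewrite <- (sqrt_sqrt x) at 1 by lra. rewrite ln_mult by exact Hs.
  pose proof (ln_le_sub1 _ Hs). lra.
Qed.

Lemma ln_50_le_14 : ln 50 <= 14.
Proof.
  assert (H8 : sqrt 50 <= 8).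
  { rewrite <- (sqrt_pow2 8) by lra. apply sqrt_le_1_alt. lra. }
  pose proof (ln_le_sqrt 50 ltac:(lra)). lra.
Qed.

Lemma two_lt_exp_4_5 : 2 < exp (4 / 5).
Proof.
  replace (4 / 5) with (1/5 + 1/5 + 1/5 + 1/5) by field. rewrite !exp_plus.
  assert (H : 6/5 < exp (1/5)) by (pose proof (exp_ineq1 (1/5)); lra).
  set (a := exp (1/5)) in *. assert (36/25 < a * a) by nra. nra.
Qed.

Lemma cubic_root_bounds s t : 0 <= s -> t ^ 3 = s * (2 * t + 1) ^ 2 ->
  4 * s <= t <= 1 + 4 * s.
Proof.
  intros Hs E.
  assert (Ht : 0 <= t).
  { destruct (Rle_or_lt 0 t) as [h|h]; [exact h|].
    assert (0 <= s * (2 * t + 1) ^ 2) by (apply Rmult_le_pos; [lra|apply pow2_ge_0]).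
    assert (0 < t * t) by nra. simpl in *; nra. }
  split.
  - destruct (Rle_or_lt (4 * s) t) as [h|h]; [exact h|]. simpl in *; nra.
  - destruct (Rle_or_lt t (1 + 4 * s)) as [h|h]; [exact h|]. simpl in *; nra.
Qed.

Lemma is_rhoD_sol_bounds r rho : is_rhoD_sol r rho ->
  1 + 4 * r ^ 2 <= rho <= 2 + 4 * r ^ 2.
Proof.
  intros (_ & Hne & E).
  assert (Hc : (rho - 1) ^ 3 = r ^ 2 * (2 * (rho - 1) + 1) ^ 2).
  { rewrite <- E. field. exact Hne. }
  pose proof (cubic_root_bounds (r ^ 2) (rho - 1) (pow2_ge_0 r) Hc). lra.
Qed.

Section RhoSolution.

Variables u rho : R.
Hypothesis u_ge_1 : 1 <= u.
Hypothesis rho_pos : 0 < rho.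
Hypothesis rho_eq : 2 * exp (rho - 1) = rho ^ 2 * u + 1.

Lemma rho_sol_gt_1_5 : 1/5 < rho.
Proof.
  assert (Hsmall : exp (- (4/5)) < / 2).
  { rewrite exp_Ropp. pose proof two_lt_exp_4_5.
    apply Rinv_lt_contravar; [apply Rmult_lt_0_compat|]; lra. }
  assert (Hbig : / 2 <= exp (rho - 1)) by nra.
  pose proof (exp_lt_inv _ _ (Rlt_le_trans _ _ _ Hsmall Hbig)). lra.
Qed.

Lemma rho_sol_ge_ln : ln u - ln 50 <= rho - 1.
Proof.
  pose proof rho_sol_gt_1_5 as Hrho.
  assert (Hsq : 1/25 <= rho ^ 2) by nra.
  assert (H : u / 50 <= exp (rho - 1)) by nra.
  apply ln_le in H; [|lra]. rewrite ln_exp, ln_div in H; lra.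
Qed.

Lemma rho_sol_le_ln : rho - 1 <= ln u + 2 * ln (1 + rho).
Proof.
  assert (H : exp (rho - 1) <= (1 + rho) ^ 2 * u) by nra.
  apply ln_le in H; [|apply exp_pos].
  rewrite ln_exp, ln_mult, ln_pow in H by (try apply pow_lt; lra).
  simpl INR in H. lra.
Qed.

Lemma rho_sol_log_error : 1 <= ln u -> Rabs (rho - 1 - ln u) <= 14 * sqrt (ln u).
Proof.
  intros HL. apply Rabs_le.
  set (q := sqrt (ln u)).
  assert (Hq : q * q = ln u) by (apply sqrt_sqrt; lra).
  assert (Hq1 : 1 <= q) by (rewrite <- sqrt_1; apply sqrt_le_1_alt; exact HL).
  split.
  - pose proof rho_sol_ge_ln. pose proof ln_50_le_14. lra.
  - set (s := sqrt (1 + rho)).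
    assert (Hs : s * s = 1 + rho) by (apply sqrt_sqrt; lra).
    assert (Hs0 : 0 <= s) by apply sqrt_pos.
    assert (Hup : rho - 1 - ln u <= 4 * (s - 1)).
    { pose proof rho_sol_le_ln. pose proof (ln_le_sqrt (1 + rho) ltac:(lra)) as Hln.
      fold s in Hln. lra. }
    assert (Hs2 : s - 2 <= 2 * q) by nra.
    lra.
Qed.

Lemma rho_sol_rel_error : 1 <= ln u ->
  Rabs ((rho - 1) / ln u - 1) <= 14 / sqrt (ln u).
Proof.
  intros HL. pose proof (rho_sol_log_error HL) as H.
  set (q := sqrt (ln u)) in *.
  assert (Hq : q * q = ln u) by (apply sqrt_sqrt; lra).
  replace ((rho - 1) / ln u - 1) with ((rho - 1 - ln u) / ln u) by (field; lra).
  rewrite Rabs_div, (Rabs_pos_eq (ln u)) by lra.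
  apply (Rle_trans _ (14 * q / ln u)).
  - apply Rmult_le_compat_r; [left; apply Rinv_0_lt_compat; lra | exact H].
  - right. rewrite <- Hq. field. nra.
Qed.

End RhoSolution.

Lemma is_rho_sol_exp_eq r rho : is_rho_sol r rho ->
  2 * exp (rho - 1) = rho ^ 2 * (1 + r ^ 2) + 1.
Proof.
  intros [Hpos E].
  rewrite (Rplus_comm 1 (r ^ 2)), <- E. field. lra.
Qed.

Lemma is_lim_of_abs_sub_le (f e : R -> R) (x : Rbar) (l : R) :
  is_lim e x 0 -> Rbar_locally' x (fun y => Rabs (f y - l) <= e y) -> is_lim f x l.
Proof.
  intros He Hfe.
  apply (is_lim_le_le_loc (fun y => l - e y) (fun y => l + e y)).
  - apply (filter_imp _ _ (fun y H => proj1 (Rabs_le_between' _ _ _) H) Hfe).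
  - replace (Finite l) with (Finite (l - 0)) by (f_equal; ring).
    exact (is_lim_minus' _ _ _ _ _ (is_lim_const l x) He).
  - replace (Finite l) with (Finite (l + 0)) by (f_equal; ring).
    exact (is_lim_plus' _ _ _ _ _ (is_lim_const l x) He).
Qed.

Lemma is_lim_ln_1_plus_sq : is_lim (fun r => ln (1 + r ^ 2)) p_infty p_infty.
Proof.
  apply (is_lim_comp ln (fun r => 1 + r ^ 2) p_infty p_infty p_infty).
  - exact is_lim_ln_p.
  - apply (is_lim_le_p_loc (fun r => r)); [|exact (is_lim_id p_infty)].
    exists 0. intros r _. nra.
  - exists 0. intros r _. discriminate.
Qed.

Theorem lemma1 (rhoD rho : R -> R)
  (HrhoD : forall r, 0 <= r -> is_rhoD_sol r (rhoD r))
  (Hrho : forall r, 0 <= r -> is_rho_sol r (rho r)) :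
  (forall r, 0 <= r -> 1 + 4 * r ^ 2 <= rhoD r <= 2 + 4 * r ^ 2) /\
  is_lim (fun r => (rho r - 1) / ln (1 + r ^ 2)) p_infty (Finite 1).
Proof.
  split.
  { intros r Hr. exact (is_rhoD_sol_bounds r (rhoD r) (HrhoD r Hr)). }
  apply (is_lim_of_abs_sub_le _ (fun r => 14 / sqrt (ln (1 + r ^ 2)))).
  - replace (Finite 0) with (Rbar_mult 14 (Rbar_inv p_infty)) by (simpl; f_equal; ring).
    apply is_lim_scal_l, is_lim_inv; [|discriminate].
    exact (is_lim_sqrt_p _ _ is_lim_ln_1_plus_sq).
  - assert (Hlarge : Rbar_locally' p_infty (fun r => 1 < ln (1 + r ^ 2)))
      by exact (proj2 (is_lim_spec _ _ _) is_lim_ln_1_plus_sq 1).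
    assert (Hpos : Rbar_locally' p_infty (fun r => 0 <= r)) by (exists 0; intros; lra).
    refine (filter_imp _ _ _ (filter_and _ _ Hlarge Hpos)). intros r [HL Hr].
    destruct (Hrho r Hr) as [Hrho_pos _].
    apply (rho_sol_rel_error (1 + r ^ 2) (rho r)); [nra | exact Hrho_pos | | lra].
    exact (is_rho_sol_exp_eq r (rho r) (Hrho r Hr)).
Qed.
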